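(* Let $I=(N,O,\succsim)$ be a general instance, $p$ a generalized random matching and $p'$ its associated random matching for the associated instance $I'$. If $p'$ is claimwise weakly stable and $p$ is non-wasteful and individually rational (i.e., $p'$ respects non-wastefulness and individual rationality), then $p$ is claimwise weakly stable.
   Context: General instance: $N=\{1,\dots,n\}$ agents, $O=\{o_1,\dots,o_m\}$ objects ($m,n\ge1$ arbitrary), $\emptyset$ the null object; each agent $i$ has a weak order $\succsim_i$ over $O\cup\{\emptyset\}$, each object $o$ a weak order $\succsim_o$ over $N\cup\{\emptyset\}$, with either $o\succ_i\emptyset$ or $\emptyset\succ_i o$, and either $i\succ_o\emptyset$ or $\emptyset\succ_o i$. $(i,o)$ is acceptable if $o\succ_i\emptyset$ and $i\succ_o\emptyset$. A generalized random matching is an $n\times m$ nonnegative matrix with row and column sums $\le1$; write $p(\emptyset,o)=1-\sum_{i\in N}p(i,o)$. $p$ is individually rational if $p(i,o)=0$ whenever $\emptyset\succ_i o$ or $\emptyset\succ_o i$; non-wasteful if there is no acceptable $(i,o)$ with $\sum_{o':o'\succsim_i o}p(i,o')<1$ and $\sum_j p(j,o)<1$. $p$ is claimwise weakly stable if it is individually rational, non-wasteful, and for every acceptable pair $(i,o)$ and every $j\in N$ with $i\succ_o j$: $\sum_{o'\in O:o'\succsim_i o,\,o'\ne o}p(i,o')\ge p(j,o)+p(\emptyset,o)$. Associated instance: $D=\{d_1,\dots,d_m\}$, $\Phi=\{\phi_1,\dots,\phi_n\}$, $N'=N\cup D$, $O'=O\cup\Phi$, with weak orders (blocks best to worst, consecutive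 blocks strict): $i\in N$: objects acceptable to $i$ by $\succsim_i$, $\phi_i$, $\phi_k$ ($k\ne i$) in increasing index, objects unacceptable to $i$ by $\succsim_i$; $o_j$: agents acceptable to $o_j$ by $\succsim_{o_j}$, $d_j$, $d_k$ ($k\ne j$) in increasing index, agents unacceptable to $o_j$ by $\succsim_{o_j}$; $d_j$: $o_j$, other objects of $O$ in increasing index, then null objects with $\phi_k\succsim'_{d_j}\phi_l$ iff $k\succsim_{o_j}l$; $\phi_i$: $i$, other agents of $N$ in increasing index, then dummies with $d_k\succsim'_{\phi_i}d_l$ iff $o_k\succsim_i o_l$. Associated random matching: $p'(i,o_j)=p(i,o_j)$, $p'(d_j,\phi_i)=p(i,o_j)$, $p'(i,\phi_i)=1-\sum_o p(i,o)$, $p'(d_j,o_j)=1-\sum_i p(i,o_j)$, other entries $0$. A bistochastic matrix $q$ on $N'\times O'$ is claimwise weakly stable if for every $(a,c)\in N'\times O'$ and every $b\in N'$ with $a\succ'_c b$: $\sum_{c':c'\succsim'_a c,\,c'\neq c}q(a,c')\ge q(b,c)$. *)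

From HB Require Import structures.
From mathcomp Require Import all_boot all_order all_algebra.
Set Implicit Arguments. Unset Strict Implicit. Unset Printing Implicit Defensive.
Import Order.TTheory GRing.Theory Num.Theory.
Local Open Scope ring_scope.

(* Agents are 'I_n, objects are 'I_m; [None] is the null object / null agent.
   Agent i's weak order over O u {null}: prefN i : rel (option 'I_m),
   object o's weak order over N u {null}: prefO o : rel (option 'I_n).
   [r x y] reads "x is weakly preferred to y". *)

Definition weak_order (T : Type) (r : rel T) := total r /\ transitive r.

Definition strict (T : Type) (r : rel T) (x y : T) := r x y && ~~ r y x.

Definition null_strict (T : Type) (r : rel (option T)) :=
  forall x : T, strict r (Some x) None \/ strict r None (Some x).

Section General.
Variables (R : realFieldType) (n m : nat).
Variables (prefN : 'I_n -> rel (option 'I_m)) (prefO : 'I_m -> rel (option 'I_n)).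

Definition gen_random_matching (p : 'I_n -> 'I_m -> R) :=
  [/\ forall i o, 0 <= p i o,
      forall i, \sum_(o < m) p i o <= 1
    & forall o, \sum_(i < n) p i o <= 1].

Definition p_null (p : 'I_n -> 'I_m -> R) (o : 'I_m) : R := 1 - \sum_(i < n) p i o.

Definition acceptable (i : 'I_n) (o : 'I_m) : bool :=
  strict (prefN i) (Some o) None && strict (prefO o) (Some i) None.

Definition indiv_rational (p : 'I_n -> 'I_m -> R) :=
  forall i o, strict (prefN i) None (Some o) \/ strict (prefO o) None (Some i) ->
    p i o = 0.

Definition non_wasteful (p : 'I_n -> 'I_m -> R) :=
  ~ exists i o, [/\ acceptable i o,
      \sum_(o' < m | prefN i (Some o') (Some o)) p i o' < 1
    & \sum_(j < n) p j o < 1].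

Definition claimwise_weakly_stable (p : 'I_n -> 'I_m -> R) :=
  [/\ indiv_rational p, non_wasteful p &
    forall i o, acceptable i o -> forall j : 'I_n,
      strict (prefO o) (Some i) (Some j) ->
      p j o + p_null p o <=
        \sum_(o' < m | prefN i (Some o') (Some o) && (o' != o)) p i o'].

(* N' = N + D  (inl i = agent i, inr j = dummy d_j)
   O' = O + Phi (inl j = object o_j, inr i = null object phi_i) *)
Definition N' := ('I_n + 'I_m)%type.
Definition O' := ('I_m + 'I_n)%type.

Definition blex (T : Type) (b : T -> nat) (w : rel T) : rel T :=
  fun x y => (b x < b y)%N || ((b x == b y) && w x y).

Definition prefA' (a : N') : rel O' :=
  match a with
  | inl i =>
      blex (fun c : O' => match c with
              | inl o => if strict (prefN i) (Some o) None then 0%N else 3%N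
              | inr k => if k == i then 1%N else 2%N end)
           (fun x y : O' => match x, y with
              | inl o, inl o' => prefN i (Some o) (Some o')
              | inr k, inr k' => (k <= k')%N
              | _, _ => true end)
  | inr j =>
      blex (fun c : O' => match c with
              | inl o => if o == j then 0%N else 1%N
              | inr _ => 2%N end)
           (fun x y : O' => match x, y with
              | inl o, inl o' => (o <= o')%N
              | inr k, inr l => prefO j (Some k) (Some l)
              | _, _ => true end)
  end.

Definition prefB' (c : O') : rel N' :=
  match c with
  | inl j =>
      blex (fun a : N' => match a with
              | inl i => if strict (prefO j) (Some i) None then 0%N else 3%N
              | inr k => if k == j then 1%N else 2%N end)
           (fun x y : N' => match x, y with
              | inl i, inl i' => prefO j (Some i) (Some i')
              | inr k, inr k' => (k <= k')%N
              | _, _ => true end)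
  | inr i =>
      blex (fun a : N' => match a with
              | inl a => if a == i then 0%N else 1%N
              | inr _ => 2%N end)
           (fun x y : N' => match x, y with
              | inl a, inl a' => (a <= a')%N
              | inr k, inr l => prefN i (Some k) (Some l)
              | _, _ => true end)
  end.

Definition assoc_matching (p : 'I_n -> 'I_m -> R) (a : N') (c : O') : R :=
  match a, c with
  | inl i, inl j => p i j
  | inr j, inr i => p i j
  | inl i, inr k => if k == i then 1 - \sum_(o < m) p i o else 0
  | inr j, inl o => if o == j then 1 - \sum_(i < n) p i j else 0
  end.

Definition bistochastic (q : N' -> O' -> R) :=
  [/\ forall a c, 0 <= q a c,
      forall a, \sum_(c : O') q a c = 1
    & forall c, \sum_(a : N') q a c = 1].

Definition claimwise_weakly_stable' (q : N' -> O' -> R) :=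
  bistochastic q /\
  forall (a : N') (c : O') (b : N'), strict (prefB' c) a b ->
    q b c <= \sum_(c' : O' | prefA' a c' c && (c' != c)) q a c'.

End General.

(* Fix an acceptable pair (i, o), an agent j with i >_o j, and let S be the
   mass p gives i on objects o' <> o with o' >=_i o.  In the associated
   instance the null objects rank below every object acceptable to i and j
   ranks below i at o, so the claimwise stability of p' at (i, o) against j
   yields p(j, o) <= S; this settles the case where o is fully demanded, since
   then p(null, o) <= 0.  Otherwise non-wastefulness gives p(i, o) + S >= 1,
   and p(j, o) + p(null, o) <= 1 - p(i, o) <= S because i <> j lie in the same
   column of o. *)

From HB Require Import structures.
From mathcomp Require Import all_boot all_order all_algebra.
From mathcomp Require Import lra.
Set Implicit Arguments. Unset Strict Implicit. Unset Printing Implicit Defensive.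
Import Order.TTheory GRing.Theory Num.Theory.
Local Open Scope ring_scope.

Lemma ler_sum_subpred (R : numDomainType) (I : finType) (P Q : pred I)
    (F : I -> R) :
  (forall x, P x -> Q x) -> (forall x, Q x -> 0 <= F x) ->
  \sum_(x | P x) F x <= \sum_(x | Q x) F x.
Proof.
move=> PQ F0; rewrite [leRHS]big_mkcond [leLHS]big_mkcond /=.
apply: ler_sum => x _; case Px: (P x); first by rewrite (PQ x Px).
by case Qx: (Q x) => //; exact: F0.
Qed.

Lemma weak_order_refl (T : Type) (r : rel T) : weak_order r -> reflexive r.
Proof. by case=> total_r _ x; have := total_r x x; rewrite orbb. Qed.

Lemma strict_neq (T : eqType) (r : rel T) (x y : T) : strict r x y -> x != y.
Proof. by apply: contraTneq => ->; rewrite /strict andbN. Qed.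

Section GeneralInstance.
Variables (R : realFieldType) (n m : nat).
Variables (prefN : 'I_n -> rel (option 'I_m)) (prefO : 'I_m -> rel (option 'I_n)).
Variable p : 'I_n -> 'I_m -> R.

Lemma non_wasteful_claim (i : 'I_n) (o : 'I_m) :
  non_wasteful prefN prefO p -> acceptable prefN prefO i o ->
  \sum_(k < n) p k o < 1 ->
  1 <= \sum_(o' < m | prefN i (Some o') (Some o)) p i o'.
Proof.
move=> nw acc unsat; rewrite leNgt; apply/negP => short.
by apply: nw; exists i, o.
Qed.

Lemma add_p_null_le (o : 'I_m) (i j : 'I_n) :
  (forall k, 0 <= p k o) -> i != j -> p j o + p_null p o <= 1 - p i o.
Proof.
move=> p0 neq_ij; rewrite /p_null (bigD1 j) //= (bigD1 i) //=.
have : 0 <= \sum_(k < n | (k != j) && (k != i)) p k o by exact: sumr_ge0.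
lra.
Qed.

End GeneralInstance.

Section AssociatedInstance.
Variables (R : realFieldType) (n m : nat).
Variables (prefN : 'I_n -> rel (option 'I_m)) (prefO : 'I_m -> rel (option 'I_n)).

Lemma prefB'_strict_agents (o : 'I_m) (i j : 'I_n) :
  strict (prefO o) (Some i) None -> strict (prefO o) (Some i) (Some j) ->
  strict (prefB' prefN prefO (inl o)) (inl i) (inl j).
Proof.
by move=> accO sij; rewrite /strict /= /blex /= accO; case: ifP.
Qed.

Lemma assoc_matching_claim_le (p : 'I_n -> 'I_m -> R) (i : 'I_n) (o : 'I_m) :
  (forall o', 0 <= p i o') -> strict (prefN i) (Some o) None ->
  \sum_(c : O' n m | prefA' prefN prefO (inl i) c (inl o) && (c != inl o))
      assoc_matching p (inl i) c
  <= \sum_(o' < m | prefN i (Some o') (Some o) && (o' != o)) p i o'.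
Proof.
move=> p0 accN; rewrite big_sumType /= [X in _ + X]big1 ?addr0; last first.
  by move=> k /andP[]; rewrite /blex /= accN; case: ifP.
apply: ler_sum_subpred => [k|k _] //.
by rewrite /blex /= accN; case: ifP.
Qed.

End AssociatedInstance.

Theorem proposition30 (R : realFieldType) (n m : nat)
    (prefN : 'I_n -> rel (option 'I_m)) (prefO : 'I_m -> rel (option 'I_n))
    (n_gt0 : (0 < n)%N) (m_gt0 : (0 < m)%N)
    (prefN_wo : forall i, weak_order (prefN i))
    (prefO_wo : forall o, weak_order (prefO o))
    (prefN_null : forall i, null_strict (prefN i))
    (prefO_null : forall o, null_strict (prefO o))
    (p : 'I_n -> 'I_m -> R)
    (p_grm : gen_random_matching p)
    (p'_cws : claimwise_weakly_stable' prefN prefO (assoc_matching p))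
    (p_nw : non_wasteful prefN prefO p)
    (p_ir : indiv_rational prefN prefO p) :
  claimwise_weakly_stable prefN prefO p.
Proof.
split => // i o acc j sij.
have [p0 _ _] := p_grm.
have /andP[accN accO] := acc.
set S := \sum_(o' < m | prefN i (Some o') (Some o) && (o' != o)) p i o'.
have [saturated|unsaturated] := leP 1 (\sum_(k < n) p k o).
- have claim_j : p j o <= S.
    case: p'_cws => _ /(_ _ _ _ (prefB'_strict_agents prefN accO sij)) claim.
    exact: le_trans claim (assoc_matching_claim_le prefO (p0 i) accN).
  have : p_null p o <= 0 by rewrite subr_le0.
  lra.
- have := non_wasteful_claim p_nw acc unsaturated.
  rewrite (bigD1 o) ?(weak_order_refl (prefN_wo i)) //= -/S.
  have neq_ij : i != j by exact: (strict_neq sij).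
  have := add_p_null_le (p0^~ o) neq_ij.
  lra.
Qed.
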